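(* Let $n\ge 2$, $a\ge\sqrt{n-1}$, $f(x)=a|x^{(1)}|+\sum_{i=2}^n x^{(i)}$ on $\mathbb{R}^n$, and $0<c_1<c_2<1$. Let $x_0\in\mathbb{R}^n$ with $x_0^{(1)}\ne0$ and define $x_{k+1}=x_k+t_kd_k$ with $d_k=-\nabla f(x_k)$, where $A(t_k)$ and $W(t_k)$ hold for all $k\ge0$. Let $\tau=c_1+\frac{(n-1)(c_1-1)}{a^2}$. If $\tau>0$, then $f(x_k)$ is bounded below as $k\to\infty$.
   Context: $x^{(i)}$ is the $i$-th coordinate. At iteration $k$, the Armijo condition is $A(t)$: $f(x_k+td_k)\le f(x_k)+c_1t\nabla f(x_k)^Td_k$; the Wolfe condition is $W(t)$: $f$ is differentiable at $x_k+td_k$ and $\nabla f(x_k+td_k)^Td_k\ge c_2\nabla f(x_k)^Td_k$. *)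

(* Vectors of R^n are row vectors 'rV[R]_n;
   coordinate x^(i) (1-based in the paper) is x 0 (i-1). *)
From HB Require Import structures.
From mathcomp Require Import all_boot all_order all_algebra.
From mathcomp Require Import all_classical all_reals all_analysis.
Set Implicit Arguments. Unset Strict Implicit. Unset Printing Implicit Defensive.
Import Order.TTheory GRing.Theory Num.Theory.
Import numFieldNormedType.Exports.
Local Open Scope ring_scope.

Definition dotv (R : realType) (n : nat) (u v : 'rV[R]_n) : R :=
  \sum_(i < n) u 0 i * v 0 i.

Definition grad (R : realType) (n : nat) (f : 'rV[R]_n -> R) (x : 'rV[R]_n)
  : 'rV[R]_n := \row_(i < n) ('d f x (delta_mx 0 i : 'rV[R]_n)).

Definition fex (R : realType) (n : nat) (a : R) (x : 'rV[R]_n) : R :=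
  a * `| \sum_(i < n | val i == 0%N) x 0 i | + \sum_(i < n | val i != 0%N) x 0 i.

Definition armijo (R : realType) (n : nat) (f : 'rV[R]_n -> R) (c1 : R)
  (x d : 'rV[R]_n) (t : R) : Prop :=
  f (x + t *: d) <= f x + c1 * t * dotv (grad f x) d.

Definition wolfe (R : realType) (n : nat) (f : 'rV[R]_n -> R) (c2 : R)
  (x d : 'rV[R]_n) (t : R) : Prop :=
  differentiable f (x + t *: d) /\
  dotv (grad f (x + t *: d)) d >= c2 * dotv (grad f x) d.

From HB Require Import structures.
From mathcomp Require Import all_boot all_order all_algebra.
From mathcomp Require Import all_classical all_reals all_analysis.
From mathcomp Require Import lra ring.
Import Order.TTheory GRing.Theory Num.Theory.
Import numFieldNormedType.Exports.
Set Implicit Arguments. Unset Strict Implicit. Unset Printing Implicit Defensive.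
Local Open Scope ring_scope.

(* Off the hyperplane x^(1) = 0 the gradient is (a sgn x^(1), 1, ..., 1).  The
   Wolfe curvature condition forces the sign of x^(1) to flip at every step (a
   step keeping the sign would need c2 >= 1), and differentiability at the new
   iterate keeps x^(1) nonzero.  With a flip, |x_{k+1}^(1)| = t_k a - |x_k^(1)|,
   and the Armijo condition then says that the potential
   tau a^2 S(x) - a (n-1) |x^(1)|, where S(x) is the sum of the other
   coordinates, never decreases along the iterates.  As c1 >= 0 this potential
   is at most tau a^2 f(x), so f(x_k) >= potential(x_0) / (tau a^2). *)

Lemma normrD_sg (R : realDomainType) (c h : R) :
  `|h| < `|c| -> `|c + h| = `|c| + Num.sg c * h.
Proof.
rewrite ltr_norml; have [c0|c0|->] := ltrgtP c 0.
- by rewrite ltr0_sg // (ltr0_norm c0) => /andP[? ?]; rewrite ltr0_norm; lra.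
- by rewrite gtr0_sg // (gtr0_norm c0) => /andP[? ?]; rewrite gtr0_norm; lra.
- by rewrite normr0; lra.
Qed.

Lemma sgr_flip_of_curvature (R : realDomainType) (a N c2 u u' : R) :
  a != 0 -> 0 <= N -> c2 < 1 -> u != 0 -> u' != 0 ->
  c2 * - (a * Num.sg u * (a * Num.sg u) + N) <=
    - (a * Num.sg u' * (a * Num.sg u) + N) ->
  Num.sg u' = - Num.sg u.
Proof.
move=> a0 N0 c21 u0 u'0; have a2 : 0 < a * a by rewrite -expr2 exprn_even_gt0.
have [u'lt|u'gt|] := ltrgtP u' 0; last by move/eqP: u'0.
all: have [ult|ugt|] := ltrgtP u 0; last by move/eqP: u0.
all: rewrite ?(ltr0_sg u'lt) ?(gtr0_sg u'gt) ?(ltr0_sg ult) ?(gtr0_sg ugt) //.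
all: by rewrite ?mulrN1 ?mulr1 ?mulNr ?mulrN ?opprK; nra.
Qed.

Lemma armijo_potential_increase (R : realDomainType) (a N c1 t w w' S : R) :
  0 <= N -> w' = t * a - w ->
  a * w' + (S - t * N) <= a * w + S + c1 * t * - (a * a + N) ->
  (c1 * a ^+ 2 + N * (c1 - 1)) * S - a * N * w <=
  (c1 * a ^+ 2 + N * (c1 - 1)) * (S - t * N) - a * N * w'.
Proof.
(* Armijo rearranges to t (a^2 + tau a^2) <= 2 a w; scale it by N. *)
by move=> N0 -> arm; rewrite expr2; nra.
Qed.

Lemma normr_differentiable (R : realType) (c : R) :
  c != 0 -> differentiable (@Num.norm _ R) c.
Proof.
move=> c0; apply/derivable1_diffP.
have -> : @Num.norm _ R = id \max -%R by apply/funext => x /=; rewrite maxrN.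
apply: derivable_max => //; last exact: opp_continuous.
by rewrite /= -subr_eq0 opprK -mulr2n mulrn_eq0 (negbTE c0).
Qed.

Section NonsmoothExample.
Variables (R : realType) (m : nat) (a : R).
Local Notation vec := 'rV[R]_m.+1.
Local Notation N := (m%:R : R).

Definition tail_sum (z : vec) : R := \sum_(i < m.+1 | i != ord0) z 0 i.

Lemma head_sumE (z : vec) : \sum_(i < m.+1 | val i == 0%N) z 0 i = z 0 ord0.
Proof. by rewrite (big_pred1 ord0). Qed.

Lemma fexE (z : vec) : fex a z = a * `|z 0 ord0| + tail_sum z.
Proof. by rewrite /fex head_sumE. Qed.

Lemma tail_sumD (u v : vec) : tail_sum (u + v) = tail_sum u + tail_sum v.
Proof. by rewrite -big_split; apply: eq_bigr => i _; rewrite mxE. Qed.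

Lemma tail_sumZ (h : R) (v : vec) : tail_sum (h *: v) = h * tail_sum v.
Proof. by rewrite mulr_sumr; apply: eq_bigr => i _; rewrite mxE. Qed.

Lemma tail_sumN (v : vec) : tail_sum (- v) = - tail_sum v.
Proof. by rewrite -scaleN1r tail_sumZ mulN1r. Qed.

Lemma tail_sum_delta (i : 'I_m.+1) : tail_sum (delta_mx 0 i) = (i != ord0)%:R.
Proof.
have [->|i0] := eqVneq i ord0.
  by apply: big1 => j /negbTE j0; rewrite mxE eqxx j0.
rewrite /tail_sum (bigD1 i) //= big1 ?addr0 => [|j /andP[_ /negbTE ji]].
  by rewrite mxE !eqxx.
by rewrite mxE eqxx ji.
Qed.

Lemma tail_sum_differentiable (z : vec) : differentiable tail_sum z.
Proof.
have -> : tail_sum =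
    \sum_(i < m.+1) (fun y : vec => if i != ord0 then y 0 i else 0).
  by apply/funext => y; rewrite fct_sumE; exact: big_mkcond.
apply: differentiable_sum => i; case: (i != ord0).
  exact: differentiable_coord.
exact: differentiable_cst.
Qed.

Lemma fex_differentiable (y : vec) : y 0 ord0 != 0 -> differentiable (fex a) y.
Proof.
move=> y0.
have -> : fex a = cst a * (Num.norm \o fun z : vec => z 0 ord0) + tail_sum.
  by apply/funext => z; rewrite fexE.
apply: differentiableD; last exact: tail_sum_differentiable.
apply: differentiableM; first exact: differentiable_cst.
apply: differentiable_comp; first exact: differentiable_coord.
exact: normr_differentiable.
Qed.

Lemma fex_shift_head (y : vec) (h : R) :
  fex a (h *: delta_mx 0 ord0 + y) = a * `|y 0 ord0 + h| + tail_sum y.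
Proof.
rewrite fexE tail_sumD tail_sumZ tail_sum_delta eqxx mulr0 add0r.
by rewrite !mxE eqxx mulr1 addrC.
Qed.

Lemma fex_shift_tail (y : vec) (i : 'I_m.+1) (h : R) : i != ord0 ->
  fex a (h *: delta_mx 0 i + y) = h + fex a y.
Proof.
move=> i0; rewrite !fexE tail_sumD tail_sumZ tail_sum_delta i0 mulr1 !mxE.
by rewrite eqxx eq_sym (negbTE i0) mulr0 add0r; ring.
Qed.

Definition fex_grad_row (s : R) : vec :=
  \row_i (if i == ord0 then a * s else 1).

Lemma grad_fex (y : vec) : y 0 ord0 != 0 ->
  grad (fex a) y = fex_grad_row (Num.sg (y 0 ord0)).
Proof.
move=> y0; apply/rowP => i.
rewrite !mxE -deriveE; last exact: fex_differentiable.
apply: lim_near_cst => //; near=> h.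
have h0 : h != 0 by near: h; exact: nbhs_dnbhs_neq.
rewrite /= -[h^-1 *: _]/(h^-1 * _).
have [->|i0] := eqVneq i ord0; last by rewrite fex_shift_tail // addrK mulVf.
have hy : `|h| < `|y 0 ord0| by near: h; apply: dnbhs0_lt; rewrite normr_gt0.
rewrite fex_shift_head fexE normrD_sg //; field.
Unshelve. all: by end_near.
Qed.

Lemma fex_not_differentiable (y : vec) : a != 0 -> y 0 ord0 = 0 ->
  ~ differentiable (fex a) y.
Proof.
move=> a0 y0 /(diff_derivable (v := delta_mx 0 ord0)) dfy.
pose q h := h^-1 *: ((fex a \o shift y) (h *: delta_mx 0 ord0) - fex a y).
have qE h : q h = h^-1 * (a * `|h|).
  by rewrite /q /= fex_shift_head fexE y0 add0r normr0 mulr0 add0r addrK.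
have right : lim (q @ 0^'+)%classic = a.
  apply: lim_near_cst => //; near=> h.
  have h0 : 0 < h by near: h; exact: nbhs_right_gt.
  by rewrite qE gtr0_norm // mulrCA mulVf ?gt_eqF ?mulr1.
have left : lim (q @ 0^'-)%classic = - a.
  apply: lim_near_cst => //; near=> h.
  have h0 : h < 0 by near: h; exact: nbhs_left_lt.
  by rewrite qE ltr0_norm // !mulrN mulrCA mulVf ?lt_eqF ?mulr1.
move: (@cvg_at_rightE _ _ q 0 dfy) (@cvg_at_leftE _ _ q 0 dfy).
rewrite right left => -> /eqP.
by rewrite -subr_eq0 opprK -mulr2n mulrn_eq0 (negbTE a0).
Unshelve. all: by end_near.
Qed.

Lemma tail_sum_grad_row (s : R) : tail_sum (fex_grad_row s) = N.
Proof.
rewrite /tail_sum (eq_bigr (fun=> 1)) => [|i /negbTE i0]; last by rewrite mxE i0.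
by rewrite sumr_const cardC1 card_ord.
Qed.

Lemma dotv_grad_row (s s' : R) :
  dotv (fex_grad_row s') (- fex_grad_row s) = - (a * s' * (a * s) + N).
Proof.
rewrite /dotv (bigD1 ord0) //= !mxE eqxx mulrN opprD; congr (_ + _).
rewrite -(tail_sum_grad_row s) -sumrN; apply: eq_bigr => i /negbTE i0.
by rewrite !mxE i0 mul1r.
Qed.

Variables (c1 c2 : R).

Definition tau : R := c1 + N * (c1 - 1) / a ^+ 2.

Lemma tau_expr2 : a != 0 -> tau * a ^+ 2 = c1 * a ^+ 2 + N * (c1 - 1).
Proof. by move=> a0; rewrite /tau; field. Qed.

Definition potential (z : vec) : R :=
  tau * a ^+ 2 * tail_sum z - a * N * `|z 0 ord0|.

Lemma potential_le_fex (z : vec) : 0 < a -> 0 <= c1 ->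
  potential z <= tau * a ^+ 2 * fex a z.
Proof.
move=> a0 c10; rewrite /potential fexE tau_expr2 ?gt_eqF // -subr_ge0.
set u := `|z 0 ord0|; set S := tail_sum z.
have -> : (c1 * a ^+ 2 + N * (c1 - 1)) * (a * u + S) -
    ((c1 * a ^+ 2 + N * (c1 - 1)) * S - a * N * u) = c1 * (a ^+ 2 + N) * (a * u).
  by ring.
by rewrite !mulr_ge0 ?addr_ge0 ?sqr_ge0 ?ler0n ?normr_ge0 // ltW.
Qed.

Lemma fex_descent_step (x : vec) (t : R) : a != 0 -> c2 < 1 -> x 0 ord0 != 0 ->
  let x' := x + t *: - grad (fex a) x in
  armijo (fex a) c1 x (- grad (fex a) x) t ->
  wolfe (fex a) c2 x (- grad (fex a) x) t ->
  x' 0 ord0 != 0 /\ potential x <= potential x'.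
Proof.
move=> a0 c21 u0 x' arm [dfx' wo]; rewrite -/x' in dfx' wo.
have u'0 : x' 0 ord0 != 0.
  by apply/eqP => /(fex_not_differentiable a0); apply.
split=> //; have gE := grad_fex u0; set s := Num.sg (x 0 ord0) in gE.
rewrite /armijo -/x' !fexE gE dotv_grad_row in arm.
rewrite (grad_fex u'0) gE !dotv_grad_row in wo.
have head : x' 0 ord0 = x 0 ord0 + t * - (a * s) by rewrite /x' gE !mxE eqxx.
have tail : tail_sum x' = tail_sum x - t * N.
  by rewrite /x' gE tail_sumD tail_sumZ tail_sumN tail_sum_grad_row mulrN.
have N0 : 0 <= N := ler0n _ _.
have flip := sgr_flip_of_curvature a0 N0 c21 u0 u'0 wo.
have s2 : s * s = 1 by rewrite -expr2 sqr_sg u0.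
have normu' : `|x' 0 ord0| = t * a - `|x 0 ord0|.
  rewrite normrEsg flip -/s head (normrEsg (x 0 ord0)) -/s -[t * a]mulr1 -s2.
  by ring.
rewrite /potential tail tau_expr2 //.
apply: armijo_potential_increase normu' _ => //.
by move: arm; rewrite tail mulrACA s2 mulr1.
Qed.

End NonsmoothExample.

Theorem corollary1 (R : realType) (n : nat) (a c1 c2 : R)
  (x : nat -> 'rV[R]_n) (t : nat -> R) :
  (2 <= n)%N ->
  Num.sqrt (n.-1)%:R <= a ->
  0 < c1 -> c1 < c2 -> c2 < 1 ->
  (\sum_(i < n | val i == 0%N) x 0%N 0 i) != 0 ->
  (forall k, x k.+1 = x k + t k *: (- grad (fex a) (x k))) ->
  (forall k, armijo (fex a) c1 (x k) (- grad (fex a) (x k)) (t k)) ->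
  (forall k, wolfe (fex a) c2 (x k) (- grad (fex a) (x k)) (t k)) ->
  0 < c1 + (n.-1)%:R * (c1 - 1) / a ^+ 2 ->
  exists M : R, forall k, M <= fex a (x k).
Proof.
case: n x => [|m] x // m1 ha c10 _ c21 x00 xS arm wol tau0.
have a0 : 0 < a by apply: lt_le_trans ha; rewrite sqrtr_gt0 ltr0n.
have invariant k :
    x k 0 ord0 != 0 /\ potential a c1 (x 0%N) <= potential a c1 (x k).
  elim: k => [|k [u0 IH]]; first by rewrite -head_sumE.
  have [u'0 step] := fex_descent_step (lt0r_neq0 a0) c21 u0 (arm k) (wol k).
  by rewrite xS; split; last exact: le_trans step.
have K0 : 0 < tau m a c1 * a ^+ 2 by rewrite mulr_gt0 ?exprn_gt0.
exists (potential a c1 (x 0%N) / (tau m a c1 * a ^+ 2)) => k.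
rewrite ler_pdivrMr // mulrC; apply: le_trans (potential_le_fex _ a0 (ltW c10)).
by case: (invariant k).
Qed.
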